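(* Let $\sigma$ be a strongly erasing $k$-block substitution with $w_\epsilon\ne1^k$ that satisfies the optimality condition. Then $f_\sigma$ has $1/2$-sensitive dependence on initial conditions: for every $x\in\mathbb I$ and every $\delta>0$ there exist $z\in\mathbb I$ with $|x-z|<\delta$ and $n\in\mathbb N$ such that $|f_\sigma^n(x)-f_\sigma^n(z)|\ge 1/2$.
   Context: Notation: $\mathbb I=[0,1]$. $\{0,1\}^*$ and $\{0,1\}^\omega$ denote finite and infinite binary words, and $\epsilon$ is the empty word. For a word $w$, set $0.w=\sum_iw_i2^{-i}$. For $x\in(0,1]$, $\widetilde x$ is the unique infinite binary expansion of $x$ not ending in $0^\infty$. Fix $k\ge2$. An erasing $k$-block substitution is a map $\sigma:\{0,1\}^k\to\{0,1\}^*$ with exactly one block $w_\epsilon$ such that $\sigma(w_\epsilon)=\epsilon$. It acts blockwise on infinite words and on finite words of length a multiple of $k$. $k$-rounding: a $k$-rounding of $w$ is any word $wv$ whose length is the least multiple of $k$ that is $\ge|w|$; if $|w|$ is a multiple of $k$, the only $k$-rounding of $w$ is $w$. $\sigma$ is strongly erasing if for every $w\in\{0,1\}^*$ there exist $n\in\mathbb N$ and words $r_0,\dots,r_{n-1}$ such that $r_0$ is a $k$-rounding of $w$, $r_j$ is a $k$-rounding of $\sigma(r_{j-1})$ for $1\le j\le n-1$, and $\sigma(r_{n-1})=\epsilon$. The map $f_\sigma:\mathbb I\to\mathbb I$ is defined by $f_\sigma(x)=0.\sigma(\widetilde x)$ if $x\in(0,1]$ and $\widetilde x\neq w_\epsilon^\infty$,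 and $f_\sigma(x)=0$ otherwise. Optimality condition: every $w\in\{0,1\}^\omega$ can be written as $w=\prod_{i\ge1}\sigma(b_i)$ with blocks $b_i\in\{0,1\}^k$ satisfying $\sigma(b_i)\ne\epsilon$. *)

From Stdlib Require Import Reals ClassicalEpsilon.
From Coquelicot Require Import Coquelicot.
From mathcomp Require Import ssreflect ssrfun ssrbool eqtype ssrnat seq div.

Set Implicit Arguments.
Unset Strict Implicit.

(* Finite binary words: seq bool (true = 1).  Infinite words: nat -> bool,
   indexed from 0 (w 0 is the first digit w_1 of the paper). *)

Fixpoint binval_fin (w : seq bool) : R :=
  match w with
  | [::] => 0%R
  | b :: w' => ((if b then / 2 else 0) + binval_fin w' / 2)%R
  end.

Definition binval_inf (w : nat -> bool) : R :=
  Series (fun i => if w i then ((/ 2) ^ (S i))%R else 0%R).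

Definition is_tilde (x : R) (w : nat -> bool) : Prop :=
  binval_inf w = x /\ forall N, exists i, (N <= i)%N /\ w i = true.

(* x~ : the (unique, for x in (0,1]) such expansion *)
Definition tilde (x : R) : nat -> bool :=
  epsilon (inhabits (fun _ => false)) (is_tilde x).

Definition block (k : nat) (w : nat -> bool) (i : nat) : seq bool :=
  mkseq (fun j => w (i * k + j)%N) k.

Definition sigma_word (k : nat) (sigma : seq bool -> seq bool) (r : seq bool)
  : seq bool :=
  flatten (map sigma (reshape (nseq (size r %/ k) k) r)).

Definition is_krounding (k : nat) (w r : seq bool) : Prop :=
  (exists v, r = w ++ v) /\ (k %| size r)%N /\ (size w <= size r)%N /\
  (forall m, (k %| m)%N -> (size w <= m)%N -> (size r <= m)%N).

Definition strongly_erasing (k : nat) (sigma : seq bool -> seq bool) : Prop :=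
  forall w : seq bool, exists rs : seq (seq bool),
    (0 < size rs)%N /\
    is_krounding k w (nth [::] rs 0) /\
    (forall j, (1 <= j < size rs)%N ->
        is_krounding k (sigma_word k sigma (nth [::] rs j.-1)) (nth [::] rs j)) /\
    sigma_word k sigma (nth [::] rs (size rs).-1) = [::].

Definition optimal (k : nat) (sigma : seq bool -> seq bool) : Prop :=
  forall w : nat -> bool, exists b : nat -> seq bool,
    (forall i, size (b i) = k /\ sigma (b i) <> [::]) /\
    (forall n, let u := flatten (map (fun i => sigma (b i)) (iota 0 n)) in
       forall j, (j < size u)%N -> nth false u j = w j).

(* f_sigma; 0.sigma(x~) is the limit of the values of the finite prefixes
   sigma(b_1)...sigma(b_n) (sigma(x~) may be a finite or infinite word). *)
Definition f_sigma (k : nat) (sigma : seq bool -> seq bool) (weps : seq bool)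
  (x : R) : R :=
  if excluded_middle_informative
       ((0 < x <= 1)%R /\ ~ (forall j, tilde x j = nth false weps (j %% k)))
  then real (Lim_seq (fun n =>
         binval_fin (flatten (map (fun i => sigma (block k (tilde x) i))
                                  (iota 0 n)))))
  else 0%R.

From Stdlib Require Import Reals Lra Lia ClassicalEpsilon FunctionalExtensionality.
From Coquelicot Require Import Coquelicot.
From mathcomp Require Import ssreflect ssrfun ssrbool eqtype ssrnat seq div.
From mathcomp Require Import zify.

(* Given x and delta, choose a dyadic interval [0.p, 0.p + 2^-m] containing x
   with 2^-m < delta.  Strong erasure yields a chain r_0, ..., r_n starting with a
   k-rounding r_0 = p v of p, each r_j a k-rounding sigma(r_(j-1)) v_j of the
   previous image, and sigma(r_n) empty.  The key fact [f_sigma_realizes]: for r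
   made of whole k-blocks and any infinite word W there is U with
   f_sigma(0.(r U)) = 0.(sigma(r) W); U interleaves a factorisation
   W = sigma(b_0) sigma(b_1) ... (optimality) with erased w_eps blocks, so that
   r U is a genuine expansion x~.  Pulling targets back along the chain, every
   value 0.T, in particular 0 and 1, is f_sigma^(n+1)(z) for some z in the
   dyadic interval, and f_sigma^(n+1)(x) is at distance >= 1/2 from 0 or 1. *)

Local Open Scope R_scope.

Definition digit_weight (w : nat -> bool) (i : nat) : R :=
  if w i then (/ 2) ^ (S i) else 0.

Lemma pow2_pos n : 0 < 2 ^ n.
Proof. apply: pow_lt; lra. Qed.

Lemma inv_pow2_small eps : 0 < eps -> exists m, / 2 ^ m < eps.
Proof.
move=> Heps.
have [N HN] := pow_lt_1_zero (/ 2) ltac:(rewrite Rabs_pos_eq; lra) eps Heps.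
exists N; have := HN N (le_n N); rewrite pow_inv Rabs_pos_eq //.
by left; apply/Rinv_0_lt_compat/pow2_pos.
Qed.

Lemma inv_pow2_anti a b : (a <= b)%N -> / 2 ^ b <= / 2 ^ a.
Proof.
move=> Hab; apply: Rinv_le_contravar; first exact: pow2_pos.
by apply: Rle_pow; [lra | apply/leP].
Qed.

Lemma digit_weight_bounds w i : 0 <= digit_weight w i <= (/ 2) ^ (S i).
Proof.
rewrite /digit_weight; case: (w i); split; try lra.
all: apply: pow_le; lra.
Qed.

Lemma ex_series_digit_weight w : ex_series (digit_weight w).
Proof.
have Hgeo : ex_series (fun i => (/ 2) ^ (S i)).
  apply: (ex_series_ext (fun i => / 2 * (/ 2) ^ i)) => //.
  apply: ex_series_scal_l; exists (/ (1 - / 2)); apply: is_series_geom.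
  rewrite Rabs_pos_eq; lra.
apply: (ex_series_le _ _ _ Hgeo) => n.
by rewrite /norm /= /abs /= Rabs_pos_eq; apply digit_weight_bounds.
Qed.

Lemma binval_inf_ext w w' : (forall i, w i = w' i) -> binval_inf w = binval_inf w'.
Proof. by move=> H; apply: Series_ext => n; rewrite H. Qed.

Lemma binval_inf_cons w :
  binval_inf w = (if w 0%N then / 2 else 0) + binval_inf (fun i => w i.+1) / 2.
Proof.
rewrite /binval_inf (Series_incr_1 _ (ex_series_digit_weight w)) /digit_weight /=.
f_equal; first by case: (w 0%N); rewrite /= ?Rmult_1_r.
rewrite /Rdiv Rmult_comm -Series_scal_l; apply: Series_ext => n.
by case: (w n.+1) => /=; ring.
Qed.

Lemma Series_zero : Series (fun _ => 0) = 0.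
Proof.
rewrite (Series_ext _ (fun n => 0 * 1)); last by move=> n; ring.
by rewrite Series_scal_l; ring.
Qed.

Lemma binval_inf_false : binval_inf (fun _ => false) = 0.
Proof. by rewrite /binval_inf /= Series_zero. Qed.

Lemma binval_inf_true : binval_inf (fun _ => true) = 1.
Proof.
rewrite /binval_inf /= Series_scal_l (is_series_unique _ (/ (1 - / 2))).
  by field.
by apply: is_series_geom; rewrite Rabs_pos_eq; lra.
Qed.

Lemma binval_inf_bounds w : 0 <= binval_inf w <= 1.
Proof.
split.
  rewrite -Series_zero; apply: Series_le; last exact: ex_series_digit_weight.
  by move=> n; split; [lra | apply digit_weight_bounds].
rewrite -binval_inf_true.
apply: (Series_le (digit_weight w) (digit_weight (fun _ => true)));
  last exact: ex_series_digit_weight.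
by move=> n; move: (digit_weight_bounds w n); rewrite /digit_weight; case: (w n).
Qed.

Lemma binval_inf_pos w i : w i = true -> 0 < binval_inf w.
Proof.
elim: i w => [|i IH] w H; rewrite binval_inf_cons.
  by rewrite H; have := binval_inf_bounds (fun i => w i.+1); lra.
have := IH (fun i => w i.+1) H; have := binval_inf_bounds (fun i => w i.+1).
by case: (w 0%N); lra.
Qed.

Lemma binval_fin_cat s t :
  binval_fin (s ++ t) = binval_fin s + binval_fin t / 2 ^ size s.
Proof.
elim: s => [|b s IH] /=; first by field.
by rewrite IH; field; apply: pow_nonzero; lra.
Qed.

Definition prepend (s : seq bool) (W : nat -> bool) (i : nat) : bool :=
  if (i < size s)%N then nth false s i else W (i - size s)%N.

Lemma prepend_cat s t W i : prepend s (prepend t W) i = prepend (s ++ t) W i.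
Proof.
rewrite /prepend size_cat nth_cat.
case: ifP => H1; first by have -> : (i < size s + size t)%N by lia.
case: ifP => H2; case: ifP => H3 //; try lia.
by f_equal; lia.
Qed.

Lemma prepend_nil W i : prepend [::] W i = W i.
Proof. by rewrite /prepend /= subn0. Qed.

Lemma binval_inf_prepend s W :
  binval_inf (prepend s W) = binval_fin s + binval_inf W / 2 ^ size s.
Proof.
elim: s W => [|b s IH] W.
  by rewrite /= (binval_inf_ext _ W) => [|i]; [field | rewrite prepend_nil].
rewrite binval_inf_cons /= (binval_inf_ext _ (prepend s W)); last first.
  by move=> i; rewrite /prepend /= ltnS subSS.
by rewrite IH /prepend /=; field; apply: pow_nonzero; lra.
Qed.

Definition infinitely_many_ones (w : nat -> bool) : Prop :=
  forall N, exists i, (N <= i)%N /\ w i = true.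

Lemma infinitely_many_ones_tail w :
  infinitely_many_ones w -> infinitely_many_ones (fun i => w i.+1).
Proof. by move=> H N; case: (H N.+1) => [[|i] [Hi Hw]] //; exists i. Qed.

Lemma first_digit_eq w w' : infinitely_many_ones w -> infinitely_many_ones w' ->
  binval_inf w = binval_inf w' -> w 0%N = w' 0%N.
Proof.
have key : forall u u', u 0%N = true -> u' 0%N = false -> infinitely_many_ones u ->
    binval_inf u <> binval_inf u'.
  move=> u u' E E' Hu; rewrite (binval_inf_cons u) (binval_inf_cons u') E E'.
  have := binval_inf_bounds (fun i => u' i.+1).
  case: (Hu 1%N) => [[|i] [_ Hui]] //.
  by have := binval_inf_pos (fun i => u i.+1) i Hui; lra.
move=> H H' Heq; case E: (w 0%N); case E': (w' 0%N) => //.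
- by case: (key w w' E E' H).
- by case: (key w' w E' E H').
Qed.

Lemma binval_inf_inj w w' : infinitely_many_ones w -> infinitely_many_ones w' ->
  binval_inf w = binval_inf w' -> w = w'.
Proof.
move=> H H' Heq; apply: functional_extensionality => i.
elim: i w w' H H' Heq => [|i IH] w w' H H' Heq; first exact: first_digit_eq.
have E := first_digit_eq w w' H H' Heq.
apply: (IH (fun i => w i.+1) (fun i => w' i.+1)); try exact: infinitely_many_ones_tail.
by move: Heq; rewrite (binval_inf_cons w) (binval_inf_cons w') E; lra.
Qed.

Lemma tilde_binval_inf w : infinitely_many_ones w -> tilde (binval_inf w) = w.
Proof.
move=> H.
have [Hv Hi] : is_tilde (binval_inf w) (tilde (binval_inf w)).
  by apply: epsilon_spec; exists w.
exact: binval_inf_inj.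
Qed.

Definition is_prefix (s : seq bool) (W : nat -> bool) : Prop :=
  forall i, (i < size s)%N -> nth false s i = W i.

Lemma is_prefix_cat s t W : is_prefix (s ++ t) W -> is_prefix s W.
Proof.
move=> H i Hi; rewrite -H ?nth_cat ?Hi // size_cat.
exact: leq_trans Hi (leq_addr _ _).
Qed.

Lemma is_prefix_prepend s t W : is_prefix t W -> is_prefix (s ++ t) (prepend s W).
Proof.
move=> H i Hi; rewrite /prepend nth_cat; case: ifP => // Hl.
by rewrite H //; rewrite size_cat in Hi; lia.
Qed.

Lemma prefix_bounds s W : is_prefix s W ->
  binval_fin s <= binval_inf W <= binval_fin s + / 2 ^ size s.
Proof.
move=> H.
rewrite (binval_inf_ext W (prepend s (fun j => W (j + size s)%N))); last first.
  move=> i; rewrite /prepend; case: ifP => Hi; first by rewrite H.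
  by rewrite subnK // leqNgt Hi.
rewrite binval_inf_prepend.
have [h1 h2] := binval_inf_bounds (fun j => W (j + size s)%N).
have hp := pow2_pos (size s).
set v := binval_inf _ in h1 h2 *.
have : 0 <= v / 2 ^ size s by apply: Rdiv_le_0_compat.
have : v / 2 ^ size s <= / 2 ^ size s.
  rewrite /Rdiv -{2}(Rmult_1_l (/ 2 ^ size s)); apply: Rmult_le_compat_r => //.
  by left; apply: Rinv_0_lt_compat.
lra.
Qed.

Lemma Lim_seq_prefixes (Q : nat -> seq bool) W :
  (forall n, is_prefix (Q n) W) ->
  (forall M, exists n0, forall n, (n0 <= n)%N -> (M <= size (Q n))%N) ->
  Lim_seq (fun n => binval_fin (Q n)) = binval_inf W.
Proof.
move=> HP HS; apply: is_lim_seq_unique; apply/is_lim_seq_spec => eps.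
have [M HM] := inv_pow2_small eps (cond_pos eps).
case: (HS M) => n0 Hn0; exists n0 => n /leP Hn.
have := prefix_bounds (Q n) W (HP n); have := inv_pow2_anti M (size (Q n)) (Hn0 n Hn).
by move=> h1 h2; rewrite Rabs_minus_sym Rabs_pos_eq; lra.
Qed.

Lemma dyadic_prefix x : 0 <= x <= 1 -> forall m, exists p,
  size p = m /\ binval_fin p <= x <= binval_fin p + / 2 ^ m.
Proof.
move=> Hx; elim=> [|m [p [Hp [H1 H2]]]]; first by exists [::]; split => //=; lra.
have hp := pow2_pos m.
have E : / 2 ^ m.+1 = / 2 ^ m / 2 by rewrite /=; field; lra.
have Ebit b : binval_fin (p ++ [:: b]) = binval_fin p + (if b then / 2 ^ m.+1 else 0).
  by rewrite binval_fin_cat Hp E; case: b => /=; field; lra.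
have Hsize b : size (p ++ [:: b]) = m.+1 by rewrite size_cat Hp addn1.
case: (Rlt_le_dec x (binval_fin p + / 2 ^ m.+1)) => Hc.
  by exists (p ++ [:: false]); rewrite Hsize Ebit; split => //; rewrite E in Hc *; lra.
by exists (p ++ [:: true]); rewrite Hsize Ebit; split => //; rewrite E in Hc *; lra.
Qed.

Lemma dyadic_interval_close p W x : is_prefix p W ->
  binval_fin p <= x <= binval_fin p + / 2 ^ size p ->
  Rabs (x - binval_inf W) <= / 2 ^ size p.
Proof.
move=> HpW Hx; have := prefix_bounds p W HpW.
by move=> HW; apply: Rabs_le; lra.
Qed.

Lemma far_from_0_or_1 y : Rabs (y - 0) >= 1 / 2 \/ Rabs (y - 1) >= 1 / 2.
Proof.
case: (Rle_lt_dec (1 / 2) y) => Hy; [left | right];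
  rewrite /Rabs; case: Rcase_abs; lra.
Qed.

Local Close Scope R_scope.

Section BlockwiseImage.
Variables (k : nat) (sigma : seq bool -> seq bool) (weps : seq bool).
Hypothesis k_gt0 : (0 < k)%N.
Hypothesis size_weps : size weps = k.
Hypothesis sigma_eq_nil : forall b, size b = k -> (sigma b = [::] <-> b = weps).

Lemma sigma_weps : sigma weps = [::].
Proof. exact/sigma_eq_nil. Qed.

Definition sigma_prefix (S : nat -> bool) (n : nat) : seq bool :=
  flatten (map (fun i => sigma (block k S i)) (iota 0 n)).

Lemma sigma_prefix_add S n d : sigma_prefix S (n + d) =
  sigma_prefix S n ++ flatten (map (fun i => sigma (block k S i)) (iota n d)).
Proof. by rewrite /sigma_prefix iotaD map_cat flatten_cat. Qed.

Lemma sigma_prefix_mono S n n' : (n <= n')%N ->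
  exists t, sigma_prefix S n' = sigma_prefix S n ++ t.
Proof. by move=> H; rewrite -(subnKC H) sigma_prefix_add; eexists. Qed.

Lemma divmod_block q j : (j < k)%N -> (q * k + j) %/ k = q /\ (q * k + j) %% k = j.
Proof.
move=> Hj; rewrite divnMDl // divn_small // addn0 modnMDl modn_small //.
Qed.

Lemma f_sigma_value S W :
  infinitely_many_ones S -> (exists i, block k S i <> weps) ->
  (forall n, is_prefix (sigma_prefix S n) W) ->
  (forall M, exists n, (M <= size (sigma_prefix S n))%N) ->
  f_sigma k sigma weps (binval_inf S) = binval_inf W.
Proof.
move=> Hones [i Hi] Hpre Hlong.
have Hpos : (0 < binval_inf S)%R.
  by case: (Hones 0%N) => j [_ Hj]; exact: (binval_inf_pos S j Hj).
rewrite /f_sigma tilde_binval_inf //.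
destruct excluded_middle_informative as [Hcond | Hcond]; last first.
  exfalso; apply: Hcond; split; first by have := binval_inf_bounds S; lra.
  move=> Hper; apply: Hi; apply: (@eq_from_nth _ false); first by rewrite size_mkseq.
  rewrite size_mkseq => j Hj; rewrite nth_mkseq // Hper.
  by have [_ ->] := divmod_block i j Hj.
rewrite (Lim_seq_prefixes (sigma_prefix S) W) //= => M.
case: (Hlong M) => n0 Hn0; exists n0 => n Hn.
have [t ->] := sigma_prefix_mono S n0 n Hn.
by rewrite size_cat; apply: leq_trans Hn0 (leq_addr _ _).
Qed.

Lemma block_prepend_low r U m i : size r = (m * k)%N -> (i < m)%N ->
  block k (prepend r U) i = mkseq (fun j => nth false r (i * k + j)) k.
Proof.
move=> Hr Hi; apply: (@eq_from_nth _ false); rewrite !size_mkseq // => j Hj.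
by rewrite !nth_mkseq // /prepend Hr; have -> : (i * k + j < m * k)%N by nia.
Qed.

Lemma block_prepend_high r U m i : size r = (m * k)%N ->
  block k (prepend r U) (m + i) = block k U i.
Proof.
move=> Hr; apply: (@eq_from_nth _ false); rewrite !size_mkseq // => j Hj.
rewrite !nth_mkseq // /prepend Hr.
have -> : ((m + i) * k + j < m * k)%N = false by nia.
by rewrite mulnDl -addnA addKn.
Qed.

Lemma sigma_word_sigma_prefix r U m : size r = (m * k)%N ->
  sigma_word k sigma r = sigma_prefix (prepend r U) m.
Proof.
move=> Hr; rewrite /sigma_word /sigma_prefix Hr mulnK //.
suff -> : reshape (nseq m k) r = map (block k (prepend r U)) (iota 0 m).
  by rewrite -map_comp.
apply: (@eq_from_nth _ [::]); first by rewrite size_map size_iota size_reshape size_nseq.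
rewrite size_reshape size_nseq => i Hi.
rewrite (nth_map 0%N) ?size_iota // nth_iota // add0n (block_prepend_low r U m i Hr Hi).
rewrite nth_reshape nth_nseq Hi take_nseq ?sumn_nseq; last by lia.
have Hik : (k * i + k <= m * k)%N by nia.
apply: (@eq_from_nth _ false).
  by rewrite size_take size_drop size_mkseq Hr; case: ifP => //; lia.
move=> j; rewrite size_take size_drop Hr => Hj.
have Hj' : (j < k)%N by move: Hj; case: ifP => H0 //; lia.
by rewrite nth_take // nth_drop nth_mkseq //; f_equal; lia.
Qed.

Lemma sigma_prefix_prepend r U m i : size r = (m * k)%N ->
  sigma_prefix (prepend r U) (m + i) = sigma_word k sigma r ++ sigma_prefix U i.
Proof.
move=> Hr; rewrite sigma_prefix_add -(sigma_word_sigma_prefix r U m Hr); congr (_ ++ _).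
rewrite /sigma_prefix -{1}(addn0 m) iotaDl -map_comp; congr flatten.
by apply: eq_map => j /=; rewrite block_prepend_high.
Qed.

(* The word b_0 w_eps b_1 w_eps b_2 ...: its image under sigma is
   sigma(b_0) sigma(b_1) ..., and the erased w_eps blocks guarantee
   infinitely many ones when w_eps contains a one. *)
Definition interleave (b : nat -> seq bool) (j : nat) : bool :=
  if odd (j %/ k) then nth false weps (j %% k)
  else nth false (b (j %/ k)./2) (j %% k).

Lemma block_interleave_even b i : size (b i) = k -> block k (interleave b) i.*2 = b i.
Proof.
move=> Hb; apply: (@eq_from_nth _ false); rewrite size_mkseq // => j Hj.
rewrite nth_mkseq // /interleave; have [-> ->] := divmod_block i.*2 j Hj.
by rewrite odd_double doubleK.
Qed.

Lemma block_interleave_odd b i : block k (interleave b) i.*2.+1 = weps.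
Proof.
apply: (@eq_from_nth _ false); rewrite size_mkseq // => j Hj.
rewrite nth_mkseq // /interleave; have [-> ->] := divmod_block i.*2.+1 j Hj.
by rewrite /= odd_double.
Qed.

Lemma sigma_prefix_interleave b n : (forall i, size (b i) = k) ->
  sigma_prefix (interleave b) n.*2 = flatten (map (fun i => sigma (b i)) (iota 0 n)).
Proof.
move=> Hb; elim: n => [|n IH] //.
rewrite doubleS -addn2 sigma_prefix_add IH -[n.+1]addn1 iotaD map_cat flatten_cat /=.
by rewrite add0n block_interleave_even // block_interleave_odd sigma_weps.
Qed.

Lemma has_one_of_ne_weps s : size s = k -> s <> weps -> ~~ has id weps -> has id s.
Proof.
move=> Hsz Hne /hasPn Hw0; apply/negP => /negP/hasPn Hs0; apply: Hne.
apply: (@eq_from_nth _ false) => [|j Hj]; first by rewrite Hsz.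
have := Hs0 _ (mem_nth false Hj).
have := Hw0 _ (mem_nth false (_ : (j < size weps)%N)); rewrite size_weps -Hsz.
by move=> /(_ Hj); case: (nth _ s j); case: (nth _ weps j).
Qed.

Lemma infinitely_many_ones_interleave r b :
  (forall i, size (b i) = k /\ sigma (b i) <> [::]) ->
  infinitely_many_ones (prepend r (interleave b)).
Proof.
move=> Hb N.
have [p [Hp Hpt]] : exists p, (N <= p)%N /\ interleave b p = true.
  case Hwt: (has id weps).
    move/(has_nthP false): Hwt => [j Hj Hwj]; rewrite size_weps in Hj.
    exists (N.*2.+1 * k + j)%N; split; first by nia.
    by rewrite /interleave; have [-> ->] := divmod_block N.*2.+1 j Hj; rewrite /= odd_double.
  case: (Hb N) => Hsz Hne.
  have Hne' : b N <> weps by move=> E; apply: Hne; rewrite E sigma_weps.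
  move: (has_one_of_ne_weps (b N) Hsz Hne' (negbT Hwt)) => /(has_nthP false) [j Hj Hbj].
  rewrite Hsz in Hj; exists (N.*2 * k + j)%N; split; first by nia.
  by rewrite /interleave; have [-> ->] := divmod_block N.*2 j Hj; rewrite odd_double doubleK.
exists (size r + p)%N; split; first by lia.
by rewrite /prepend ltnNge leq_addr /= addKn.
Qed.

Lemma size_flatten_nonempty (b : nat -> seq bool) n : (forall i, sigma (b i) <> [::]) ->
  (n <= size (flatten (map (fun i => sigma (b i)) (iota 0 n))))%N.
Proof.
move=> Hb; elim: n => [|n IH] //.
rewrite -addn1 iotaD map_cat flatten_cat size_cat /= cats0.
have : (0 < size (sigma (b (0 + n)%N)))%N by case E: (sigma _) => //; case: (Hb (0 + n)%N).
lia.
Qed.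

(* Optimality writes W as
   sigma(b_0) sigma(b_1) ..., and U interleaves the b_i with erased blocks. *)
Lemma f_sigma_realizes r W : optimal k sigma -> (k %| size r)%N ->
  exists U, f_sigma k sigma weps (binval_inf (prepend r U)) =
            binval_inf (prepend (sigma_word k sigma r) W).
Proof.
move=> Hopt /dvdnP [m Hr]; have [b [Hb Hpre]] := Hopt W.
have Hbs i : size (b i) = k by case: (Hb i).
have Hbn i : sigma (b i) <> [::] by case: (Hb i).
have Hprefix n : sigma_prefix (prepend r (interleave b)) (m + n.*2) =
    sigma_word k sigma r ++ flatten (map (fun i => sigma (b i)) (iota 0 n)).
  by rewrite sigma_prefix_prepend // sigma_prefix_interleave.
exists (interleave b); apply: f_sigma_value.
- exact: infinitely_many_ones_interleave.
- exists (m + 0.*2)%N; rewrite block_prepend_high // block_interleave_even //.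
  by move=> E; apply: (Hbn 0%N); rewrite E sigma_weps.
- move=> n; have Hn : (n <= m + n.*2)%N by lia.
  have [t Ht] := sigma_prefix_mono (prepend r (interleave b)) n (m + n.*2) Hn.
  by apply: (is_prefix_cat _ t); rewrite -Ht Hprefix; apply: is_prefix_prepend; exact: Hpre.
- move=> M; exists (m + M.*2)%N; rewrite Hprefix size_cat.
  by apply: leq_trans (size_flatten_nonempty b M Hbn) (leq_addl _ _).
Qed.

End BlockwiseImage.

Section Iteration.
Variables (k : nat) (sigma : seq bool -> seq bool) (weps : seq bool).
Hypothesis k_gt0 : (0 < k)%N.
Hypothesis size_weps : size weps = k.
Hypothesis sigma_eq_nil : forall b, size b = k -> (sigma b = [::] <-> b = weps).
Hypothesis sigma_optimal : optimal k sigma.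

(* Along a strongly erasing chain r = r_0, r_1, ..., r_n (r_j a k-rounding of
   sigma(r_(j-1)) and sigma(r_n) empty) every value 0.T is reached after n+1
   steps of f_sigma from a point whose expansion starts with r: pull the target
   back one step at a time with [f_sigma_realizes]. *)
Lemma erasing_chain_reaches rest r :
  (k %| size r)%N ->
  (forall j, (1 <= j < size (r :: rest))%N ->
     is_krounding k (sigma_word k sigma (nth [::] (r :: rest) j.-1))
                    (nth [::] (r :: rest) j)) ->
  sigma_word k sigma (last r rest) = [::] ->
  forall T, exists U,
    iter (size rest).+1 (f_sigma k sigma weps) (binval_inf (prepend r U)) = binval_inf T.
Proof.
elim: rest r => [|r' rest IH] r Hr Hchain Hlast T.
  have [U HU] := f_sigma_realizes k sigma weps k_gt0 size_weps sigma_eq_nil r T sigma_optimal Hr.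
  by exists U; rewrite /= HU Hlast; apply: binval_inf_ext => i; rewrite prepend_nil.
have [[v Hv] [Hr' _]] := Hchain 1%N erefl; rewrite /= in Hv Hr'.
have Hchain' : forall j, (1 <= j < size (r' :: rest))%N ->
    is_krounding k (sigma_word k sigma (nth [::] (r' :: rest) j.-1))
                   (nth [::] (r' :: rest) j).
  by case=> [|j] // Hj; exact: (Hchain j.+2 Hj).
have [U' HU'] := IH r' Hr' Hchain' Hlast T.
have [U HU] := f_sigma_realizes k sigma weps k_gt0 size_weps sigma_eq_nil r (prepend v U') sigma_optimal Hr.
exists U; rewrite iterSr HU -HU'; congr iter.
by apply: binval_inf_ext => i; rewrite prepend_cat /= -Hv.
Qed.

End Iteration.

Theorem lemma4p4 (k : nat) (sigma : seq bool -> seq bool) (weps : seq bool) :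
  (2 <= k)%N ->
  size weps = k ->
  (forall b : seq bool, size b = k -> (sigma b = [::] <-> b = weps)) ->
  weps <> nseq k true ->
  strongly_erasing k sigma ->
  optimal k sigma ->
  forall (x delta : R), (0 <= x <= 1)%R -> (0 < delta)%R ->
  exists (z : R) (n : nat),
    (0 <= z <= 1)%R /\ (Rabs (x - z) < delta)%R /\
    (Rabs (iter n (f_sigma k sigma weps) x - iter n (f_sigma k sigma weps) z)
       >= 1 / 2)%R.
Proof.
move=> Hk2 Hw Hs _ Hse Hopt x delta Hx Hdelta.
have [m Hm] := inv_pow2_small delta Hdelta.
have [p [Hp Hpx]] := dyadic_prefix x Hx m.
have [[|r rest] [Hrs0 [[[v Hv] [Hdiv _]] [Hchain Hlast]]]] := Hse p => //.
rewrite /= in Hv Hdiv; rewrite nth_last /= in Hlast.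
have Hk : (0 < k)%N by apply: leq_trans Hk2.
have reach := erasing_chain_reaches k sigma weps Hk Hw Hs Hopt rest r Hdiv Hchain Hlast.
have close U : (0 <= binval_inf (prepend r U) <= 1 /\
                Rabs (x - binval_inf (prepend r U)) < delta)%R.
  split; first exact: binval_inf_bounds.
  have HpU : is_prefix p (prepend r U).
    by apply: (is_prefix_cat p (v ++ [::])); rewrite catA -Hv; apply: is_prefix_prepend => i; rewrite ltn0.
  by rewrite -Hp in Hpx; have := dyadic_interval_close p _ x HpU Hpx; rewrite Hp; lra.
case: (far_from_0_or_1 (iter (size rest).+1 (f_sigma k sigma weps) x)) => Hfar.
- have [U HU] := reach (fun _ => false).
  exists (binval_inf (prepend r U)), (size rest).+1.
  by rewrite HU binval_inf_false; have [Hz Hxz] := close U.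
- have [U HU] := reach (fun _ => true).
  exists (binval_inf (prepend r U)), (size rest).+1.
  by rewrite HU binval_inf_true; have [Hz Hxz] := close U.
Qed.
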